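(* Let $\varphi$ be an automorphism of $F_n$ with basis $A$. Then $\varphi$ is almost length-increasing if and only if $|a\varphi|=1$ for every $a\in A$.
   Context: Elements of $F_n$ are identified with reduced words over $A\cup A^{-1}$ and $|u|$ denotes length; maps are written on the right. An endomorphism $\varphi$ of $F_n$ is almost length-increasing if $|u\varphi|<|u|$ for only finitely many $u\in F_n$. *)

(* The free group F_n on the basis A = {a_0,...,a_(n-1)},
   realised as the set of reduced words over A ∪ A^{-1}. *)
From mathcomp Require Import all_boot.
Set Implicit Arguments. Unset Strict Implicit. Unset Printing Implicit Defensive.

(* A letter (i, false) is the generator a_i, (i, true) is a_i^{-1}. *)
Definition letter (n : nat) := ('I_n * bool)%type.
Definition word (n : nat) := seq (letter n).

Definition inv_letter n (x : letter n) : letter n := (x.1, ~~ x.2).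

Definition gen n (i : 'I_n) : word n := [:: (i, false)].

Fixpoint reduced n (w : word n) : bool :=
  match w with
  | x :: ((y :: _) as t) => (y != inv_letter x) && reduced t
  | _ => true
  end.

Definition reduce n (w : word n) : word n :=
  foldr (fun x acc => match acc with
                      | y :: t => if y == inv_letter x then t else x :: acc
                      | [::] => [:: x]
                      end) [::] w.

Definition fmul n (u v : word n) : word n := reduce (u ++ v).

(* endomorphism of F_n (maps written on the right: u phi = phi u) *)
Definition is_endo n (phi : word n -> word n) : Prop :=
  (forall u, reduced u -> reduced (phi u)) /\
  (forall u v, reduced u -> reduced v -> phi (fmul u v) = fmul (phi u) (phi v)).

Definition is_auto n (phi : word n -> word n) : Prop :=
  is_endo phi /\
  (forall u v, reduced u -> reduced v -> phi u = phi v -> u = v) /\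
  (forall v, reduced v -> exists2 u, reduced u & phi u = v).

Definition almost_length_increasing n (phi : word n -> word n) : Prop :=
  exists s : seq (word n),
    forall u, reduced u -> size (phi u) < size u -> u \in s.

From mathcomp Require Import all_boot.
From mathcomp Require Import zify.
Set Implicit Arguments. Unset Strict Implicit. Unset Printing Implicit Defensive.

(* A nontrivial reduced word w is a conjugate x c x^-1 of a nonempty cyclically
   reduced word c, so |w^k| = 2|x| + k|c| grows at least like k.  If an
   almost length-increasing automorphism sent some w with |w| >= 2 to a letter,
   the powers of w would all be shortened, infinitely many of them.  Hence the
   preimages of the 2n letters are letters; as the letters form a finite set,
   phi permutes them, and in particular |a phi| = 1.  Conversely, an
   automorphism permuting the letters preserves reducedness and length. *)

Section Words.
Variable n : nat.
Implicit Types (x y z l : letter n) (u v w a b c m : word n).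

Definition push x w : word n :=
  match w with
  | y :: t => if y == inv_letter x then t else x :: w
  | [::] => [:: x]
  end.

Lemma reduceE w : reduce w = foldr push [::] w.
Proof. by []. Qed.

Lemma reduce_cat a b : reduce (a ++ b) = foldr push (reduce b) a.
Proof. by rewrite reduceE foldr_cat. Qed.

Lemma inv_letterK : involutive (@inv_letter n).
Proof. by case=> i s; rewrite /inv_letter /= negbK. Qed.

Lemma inv_letter_neq x : x != inv_letter x.
Proof. by case: x => i [] //; rewrite /inv_letter /= xpair_eqE eqxx. Qed.

Definition no_cancel x w : bool := if w is y :: _ then y != inv_letter x else true.

Lemma reduced_cons x w : reduced (x :: w) = no_cancel x w && reduced w.
Proof. by case: w. Qed.

Lemma reduced_catl a b : reduced (a ++ b) -> reduced a.
Proof.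
elim: a => // x a IHa; rewrite cat_cons !reduced_cons => /andP[hx /IHa ->].
by rewrite andbT; case: a {IHa} hx.
Qed.

Lemma reduced_catr a b : reduced (a ++ b) -> reduced b.
Proof. by elim: a => // x a IHa; rewrite cat_cons reduced_cons => /andP[_ /IHa]. Qed.

Lemma reduced_glue a m b :
  reduced (a ++ m) -> reduced (m ++ b) -> m != [::] -> reduced (a ++ m ++ b).
Proof.
move=> + mb m0; elim: a => // x a IHa.
rewrite !cat_cons !reduced_cons => /andP[hx /IHa ->]; rewrite andbT.
by case: a {IHa} hx => //; case: m m0 mb.
Qed.

Lemma reduced_push x w : reduced w -> reduced (push x w).
Proof.
case: w => // y t; rewrite /push; case: eqP => [_|ne rt].
  by rewrite reduced_cons => /andP[].
by rewrite reduced_cons rt andbT; apply/eqP.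
Qed.

Lemma reduced_foldr_push w0 w : reduced w0 -> reduced (foldr push w0 w).
Proof. by move=> r0; elim: w => //= x w; apply: reduced_push. Qed.

Lemma reduced_reduce w : reduced (reduce w).
Proof. exact: reduced_foldr_push. Qed.

Lemma reduce_id w : reduced w -> reduce w = w.
Proof.
elim: w => // x w IHw; rewrite reduced_cons => /andP[hx rw].
rewrite /reduce /= -/(reduce w) IHw //.
by case: w {IHw rw} hx => // y t /= /negbTE ->.
Qed.

Lemma fmulw1 w : reduced w -> fmul w [::] = w.
Proof. by rewrite /fmul cats0; apply: reduce_id. Qed.

Lemma reduced_fmul u v : reduced (fmul u v).
Proof. exact: reduced_reduce. Qed.

Lemma push_invK y w : reduced w -> push (inv_letter y) (push y w) = w.
Proof.
case: w => [|z t]; first by rewrite /push inv_letterK eqxx.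
rewrite {2}/push; case: eqP => [zy|_ _]; last by rewrite /push inv_letterK eqxx.
case: t => [|z' t]; first by rewrite /push zy.
rewrite reduced_cons /push zy inv_letterK => /andP[hz' _].
by move: hz'; rewrite /= inv_letterK => /negbTE ->.
Qed.

Definition invw w : word n := rev (map (@inv_letter n) w).

Lemma invw_cons x w : invw (x :: w) = invw w ++ [:: inv_letter x].
Proof. by rewrite /invw map_cons rev_cons cats1. Qed.

Lemma foldr_push_invwK w0 w :
  reduced w0 -> foldr push (foldr push w0 w) (invw w) = w0.
Proof.
move=> r0; elim: w => //= x w IHw; rewrite invw_cons foldr_cat /=.
by rewrite push_invK ?IHw ?reduced_foldr_push.
Qed.

Fixpoint catpow c k : word n := if k is k'.+1 then c ++ catpow c k' else [::].

Lemma size_catpow c k : size (catpow c k) = k * size c.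
Proof. by elim: k => //= k IHk; rewrite size_cat IHk mulSn. Qed.

Definition cyclically_reduced c := (c != [::]) && reduced (c ++ c).

Lemma reduced_conj_catpow u c k :
  reduced (u ++ c ++ invw u) -> cyclically_reduced c ->
  reduced (u ++ catpow c k.+1 ++ invw u).
Proof.
move=> rw /andP[c0 rcc]; elim: k => [|k IHk]; first by rewrite /= cats0.
rewrite [catpow _ _]/= -catA; apply: reduced_glue => //.
  by apply: (@reduced_catl _ (invw u)); rewrite -catA.
rewrite -catA; apply: reduced_glue => //.
by move: IHk => /reduced_catr; rewrite /= -catA.
Qed.

Lemma fmul_conj_catpow u c k :
  reduced (u ++ c ++ invw u) -> cyclically_reduced c ->
  fmul (u ++ c ++ invw u) (u ++ catpow c k.+1 ++ invw u) = u ++ catpow c k.+2 ++ invw u.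
Proof.
move=> rw cc; rewrite /fmul.
have -> : (u ++ c ++ invw u) ++ u ++ catpow c k.+1 ++ invw u
        = (u ++ c) ++ invw u ++ u ++ catpow c k.+1 ++ invw u by rewrite !catA.
rewrite reduce_cat (reduce_cat (invw u)) (reduce_cat u) foldr_push_invwK ?reduced_reduce //.
rewrite -reduce_cat reduce_id; first by rewrite -!catA.
by move: (reduced_conj_catpow k.+1 rw cc); rewrite /= -!catA.
Qed.

Lemma reduced_conj_decomp w : reduced w -> w != [::] ->
  exists u c, w = u ++ c ++ invw u /\ cyclically_reduced c.
Proof.
move: {2}(size w) (leqnn (size w)) => N; elim: N w => [|N IHN] [|y m] // sz rw _.
case/lastP: m sz rw => [|m z] sz rw.
  by exists [::], [:: y]; rewrite /cyclically_reduced /= inv_letter_neq.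
have [zy|nzy] := eqVneq z (inv_letter y).
  case: m sz rw => [|y' m] sz rw; first by move: rw; rewrite /= zy eqxx.
  have rm : reduced (y' :: m).
    by move: rw; rewrite reduced_cons -cats1 => /andP[_ /reduced_catl].
  have smN : size (y' :: m) <= N by move: sz; rewrite /= size_rcons; lia.
  have [u [c [-> cc]]] := IHN _ smN rm isT.
  by exists (y :: u), c; rewrite zy invw_cons -cats1 !catA.
exists [::], (y :: rcons m z); rewrite /invw /= cats0; split=> //.
rewrite /cyclically_reduced -rcons_cons -cats1 -catA; apply/andP; split=> //.
apply: reduced_glue => //; first by rewrite cats1.
rewrite cat1s reduced_cons cats1 rcons_cons rw andbT /=.
by apply: contra nzy => /eqP ->; rewrite inv_letterK.
Qed.

Definition fexp w k : word n := iter k (fmul w) [::].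

Lemma fexpS w k : fexp w k.+1 = fmul w (fexp w k).
Proof. by []. Qed.

Lemma reduced_fexp w k : reduced (fexp w k).
Proof. by case: k => // k; apply: reduced_fmul. Qed.

Lemma fexp_conj u c k :
  reduced (u ++ c ++ invw u) -> cyclically_reduced c ->
  fexp (u ++ c ++ invw u) k.+1 = u ++ catpow c k.+1 ++ invw u.
Proof.
move=> rw cc; elim: k => [|k IHk]; first by rewrite /= fmulw1 // cats0.
by rewrite fexpS IHk fmul_conj_catpow.
Qed.

Lemma size_fexp w k : reduced w -> w != [::] -> size w + k <= size (fexp w k.+1).
Proof.
move=> rw w0; have [u [c [def_w cc]]] := reduced_conj_decomp rw w0.
have c_gt0 : 0 < size c by case/andP: cc; rewrite lt0n size_eq0.
have rw' : reduced (u ++ c ++ invw u) by rewrite -def_w.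
have := leq_pmulr k c_gt0.
by rewrite def_w fexp_conj // !size_cat size_catpow; lia.
Qed.

Lemma reduced_nseq l k : reduced (nseq k l).
Proof.
elim: k => // k IHk; rewrite [nseq _ _]/= reduced_cons IHk andbT.
by case: k {IHk} => //= k; apply: inv_letter_neq.
Qed.

Lemma fexp_letter l k : fexp [:: l] k = nseq k l.
Proof.
elim: k => // k IHk; rewrite fexpS IHk /fmul.
exact: (reduce_id (reduced_nseq l k.+1)).
Qed.

End Words.

Section Endomorphism.
Variables (n : nat) (phi : word n -> word n).
Hypothesis phiE : is_endo phi.
Implicit Types (x l : letter n) (u w : word n).

Lemma endo_reduced w : reduced w -> reduced (phi w).
Proof. by case: phiE => + _; apply. Qed.

Lemma endo_fmul u w : reduced u -> reduced w -> phi (fmul u w) = fmul (phi u) (phi w).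
Proof. by case: phiE => _; apply. Qed.

(* phi [::] is idempotent, and a nontrivial reduced word has longer squares. *)
Lemma endo_nil : phi [::] = [::].
Proof.
have idem : fmul (phi [::]) (phi [::]) = phi [::] by rewrite -endo_fmul.
apply/eqP; apply: contraT => ne.
have := size_fexp 1 (endo_reduced (isT : reduced [::])) ne.
by rewrite /fexp /= fmulw1 ?idem ?endo_reduced //; lia.
Qed.

Lemma endo_fexp w k : reduced w -> phi (fexp w k) = fexp (phi w) k.
Proof.
move=> rw; elim: k => [|k IHk]; first exact: endo_nil.
by rewrite !fexpS endo_fmul ?reduced_fexp // IHk.
Qed.

Lemma endo_inv_letter x l : phi [:: x] = [:: l] -> phi [:: inv_letter x] = [:: inv_letter l].
Proof.
move=> phix; have := endo_fmul (isT : reduced [:: x]) (isT : reduced [:: inv_letter x]).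
rewrite /fmul reduceE /= eqxx endo_nil phix reduce_cat reduce_id ?endo_reduced //.
by case: (phi _) => [|y t] //=; case: eqP => [-> ->|].
Qed.

Lemma endo_gen_letters :
  (forall i : 'I_n, size (phi (gen i)) = 1) -> forall x, exists l, phi [:: x] = [:: l].
Proof.
move=> size1 [i s]; have [l phil] : exists l, phi (gen i) = [:: l].
  by move: (size1 i); case: (phi _) => [|l []] // _; exists l.
by case: s; [exists (inv_letter l); exact: (endo_inv_letter phil) | exists l].
Qed.

Lemma almost_length_increasing_letter_preimage w l :
  almost_length_increasing phi -> reduced w -> phi w = [:: l] -> size w = 1.
Proof.
case=> s shrink_in rw phiw; case: (eqVneq w [::]) => [w0|w0].
  by move: phiw; rewrite w0 endo_nil.
apply/eqP; rewrite eqn_leq lt0n size_eq0 w0 andbT leqNgt; apply/negP => w_gt1.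
pose K := \max_(v <- s) size v.
have fexp_in : fexp w K.+1 \in s.
  apply: shrink_in; first exact: reduced_fexp.
  rewrite endo_fexp // phiw fexp_letter size_nseq.
  by apply: leq_trans (size_fexp K rw w0); lia.
have := leq_trans (size_fexp K rw w0) (leq_bigmax_seq (P := predT) (F := size) _ fexp_in isT).
by rewrite -/K; lia.
Qed.

Section LetterPermutation.
Hypothesis phi_letters : forall x, exists l, phi [:: x] = [:: l].
Hypothesis phi_inj : forall u w, reduced u -> reduced w -> phi u = phi w -> u = w.

Let letter_map x : letter n := head x (phi [:: x]).

Let letter_mapE x : phi [:: x] = [:: letter_map x].
Proof. by rewrite /letter_map; have [l ->] := phi_letters x. Qed.

Let letter_map_inj : injective letter_map.
Proof.
move=> x y exy; have [] // : [:: x] = [:: y].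
by apply: phi_inj; rewrite // !letter_mapE exy.
Qed.

Let letter_map_inv x : letter_map (inv_letter x) = inv_letter (letter_map x).
Proof. by rewrite /letter_map (endo_inv_letter (letter_mapE x)). Qed.

Let reduced_map_letter_map w : reduced w -> reduced (map letter_map w).
Proof.
elim: w => // x w IHw; rewrite map_cons !reduced_cons => /andP[hx /IHw ->].
by case: w {IHw} hx => //= y t; rewrite andbT -letter_map_inv (inj_eq letter_map_inj).
Qed.

Let endo_map_letter_map w : reduced w -> phi w = map letter_map w.
Proof.
elim: w => [|x w IHw] rw; first exact: endo_nil.
have rw' : reduced w by move: rw; rewrite reduced_cons => /andP[].
rewrite -{1}[x :: w]reduce_id // -[_ :: _]/([:: x] ++ w) -/(fmul _ _).
rewrite endo_fmul // letter_mapE IHw // /fmul reduce_id //.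
exact: (reduced_map_letter_map rw).
Qed.

Lemma endo_size_letters w : reduced w -> size (phi w) = size w.
Proof. by move=> rw; rewrite endo_map_letter_map // size_map. Qed.

End LetterPermutation.
End Endomorphism.

(* The alphabet is finite, so a choice of letter preimages permutes it. *)
Lemma letters_of_letter_preimages n (f : word n -> word n) :
  (forall l, exists y, f [:: y] = [:: l]) -> forall x, exists l, f [:: x] = [:: l].
Proof.
move=> onto x.
pose g (l : letter n) := odflt l [pick y | f [:: y] == [:: l]].
have gE l : f [:: g l] = [:: l].
  rewrite /g; case: pickP => [y /eqP //|none].
  by have [y fy] := onto l; move: (none y); rewrite fy eqxx.
have g_inj : injective g by move=> l l' gll'; have := gE l; rewrite gll' gE => -[].
have [h gK hK] := injF_bij g_inj.
by exists (h x); rewrite -{1}(hK x) gE.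
Qed.

Theorem mainTheorem8 (n : nat) (phi : word n -> word n) :
  is_auto phi ->
  (almost_length_increasing phi <-> forall i : 'I_n, size (phi (gen i)) = 1).
Proof.
case=> phiE [phi_inj phi_onto]; split=> [ali i | size1].
  have preimages l : exists y, phi [:: y] = [:: l].
    have [w rw phiw] := phi_onto [:: l] isT.
    move: (almost_length_increasing_letter_preimage phiE ali rw phiw).
    by case: w {rw} phiw => [|y []] // phiy _; exists y.
  by have [l ->] := letters_of_letter_preimages preimages (i, false).
exists [::] => w rw.
by rewrite (endo_size_letters phiE (endo_gen_letters phiE size1)) ?ltnn.
Qed.
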